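(* Let $g$ be a Riemannian metric, $\widehat\nabla$ its Levi-Civita connection, $\nabla$ a metric-compatible linear connection ($\nabla g=0$), and $S$ defined by $\widehat\nabla=\nabla+S$. Then $(\omega,\nabla)$ is Poisson-compatible if and only if $$(\widehat\nabla_k\omega)^{ij}+\omega^{ir}S^j{}_{rk}-\omega^{jr}S^i{}_{rk}=0\quad\text{for all }i,j,k,$$ or equivalently $$\omega^{jm}S^i{}_{mk}=\tfrac12\Big((\widehat\nabla_k\omega)^{ij}-(\widehat\nabla_r\omega)^{mj}g^{ri}g_{mk}+(\widehat\nabla_r\omega)^{im}g^{rj}g_{mk}\Big).$$
   Context: Coordinates $x^i$, summation convention. $\nabla_jdx^i=-\Gamma^i_{jk}dx^k$ and $\widehat\nabla_jdx^i=-\widehat\Gamma^i_{jk}dx^k$; $S(\xi)=\xi_pS^p{}_{nm}dx^n\otimes dx^m$ so $\widehat\Gamma^a_{bc}=\Gamma^a_{bc}-S^a{}_{bc}$. $\omega$ antisymmetric bivector; $(\omega,\nabla)$ Poisson-compatible means $d(\omega^{ij})-\omega^{kj}\nabla_k(dx^i)-\omega^{ik}\nabla_k(dx^j)=0$ for all $i,j$. *)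

(* Local-coordinate (chart) formulation on an open set
   U of R^n; tensor fields are given by their component functions. *)
From HB Require Import structures.
From mathcomp Require Import all_boot all_order all_algebra.
From mathcomp Require Import all_classical all_reals all_analysis.
Set Implicit Arguments. Unset Strict Implicit. Unset Printing Implicit Defensive.
Import Order.TTheory GRing.Theory Num.Theory.
Import numFieldNormedType.Exports.
Local Open Scope classical_set_scope.
Local Open Scope ring_scope.

Section Defs.
Variables (R : realType) (n : nat).
Local Notation V := 'rV[R]_n.

Definition partial (k : 'I_n) (f : V -> R) : V -> R :=
  fun x => 'D_(delta_mx 0 k) f x.

Fixpoint iter_partial (l : seq 'I_n) (f : V -> R) : V -> R :=
  if l is k :: l' then partial k (iter_partial l' f) else f.

Definition smooth_on (U : set V) (f : V -> R) : Prop :=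
  forall l : seq 'I_n, forall x, U x -> differentiable (iter_partial l f) x.

Definition gmat (g : 'I_n -> 'I_n -> V -> R) (x : V) : 'M[R]_n :=
  \matrix_(i, j) g i j x.
Definition ginv (g : 'I_n -> 'I_n -> V -> R) (x : V) : 'M[R]_n :=
  invmx (gmat g x).

Definition riemannian_metric (U : set V) (g : 'I_n -> 'I_n -> V -> R) : Prop :=
  (forall i j, smooth_on U (g i j)) /\
  (forall x, U x -> forall i j, g i j x = g j i x) /\
  (forall x, U x -> forall v : 'rV[R]_n, v != 0 ->
      0 < \sum_(i < n) \sum_(j < n) v 0 i * v 0 j * g i j x).

(* A linear connection with Christoffel symbols Gm a b c = Gamma^a_{bc},
   i.e. nabla_b (dx^a) = - Gamma^a_{bc} dx^c, nabla_b d_c = Gamma^a_{bc} d_a *)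
Definition connection_on (U : set V) (Gm : 'I_n -> 'I_n -> 'I_n -> V -> R) : Prop :=
  forall a b c, smooth_on U (Gm a b c).

Definition metric_compatible (U : set V) (g : 'I_n -> 'I_n -> V -> R)
  (Gm : 'I_n -> 'I_n -> 'I_n -> V -> R) : Prop :=
  forall x, U x -> forall k i j,
    partial k (g i j) x - \sum_(m < n) Gm m k i x * g m j x
                        - \sum_(m < n) Gm m k j x * g i m x = 0.

Definition torsion_free (U : set V) (Gm : 'I_n -> 'I_n -> 'I_n -> V -> R) : Prop :=
  forall x, U x -> forall a b c, Gm a b c x = Gm a c b x.

Definition levi_civita (U : set V) (g : 'I_n -> 'I_n -> V -> R)
  (Gh : 'I_n -> 'I_n -> 'I_n -> V -> R) : Prop :=
  connection_on U Gh /\ torsion_free U Gh /\ metric_compatible U g Gh.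

Definition bivector (U : set V) (w : 'I_n -> 'I_n -> V -> R) : Prop :=
  (forall i j, smooth_on U (w i j)) /\
  (forall x, U x -> forall i j, w i j x = - w j i x).

Definition cov_bivec (Gm : 'I_n -> 'I_n -> 'I_n -> V -> R)
  (w : 'I_n -> 'I_n -> V -> R) (k i j : 'I_n) (x : V) : R :=
  partial k (w i j) x +
  \sum_(r < n) (Gm i k r x * w r j x + Gm j k r x * w i r x).

(* (omega, nabla) Poisson-compatible:
   d(w^{ij}) - w^{kj} nabla_k(dx^i) - w^{ik} nabla_k(dx^j) = 0, written in
   components along dx^m, using nabla_k dx^i = - Gamma^i_{km} dx^m. *)
Definition poisson_compatible (U : set V) (w : 'I_n -> 'I_n -> V -> R)
  (Gm : 'I_n -> 'I_n -> 'I_n -> V -> R) : Prop :=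
  forall x, U x -> forall i j m,
    partial m (w i j) x
    + \sum_(k < n) (w k j x * Gm i k m x + w i k x * Gm j k m x) = 0.

(* S defined by hat-nabla = nabla + S, i.e. hat-Gamma^a_{bc} = Gamma^a_{bc} - S^a_{bc} *)
Definition Sdiff (Gm Gh : 'I_n -> 'I_n -> 'I_n -> V -> R) (a b c : 'I_n) (x : V) : R :=
  Gm a b c x - Gh a b c x.

End Defs.

From HB Require Import structures.
From mathcomp Require Import all_boot all_order all_algebra.
From mathcomp Require Import all_classical all_reals all_analysis.
From mathcomp Require Import ring lra.
Set Implicit Arguments.
Unset Strict Implicit.
Unset Printing Implicit Defensive.
Import Order.TTheory GRing.Theory Num.Theory.
Import numFieldNormedType.Exports.
Local Open Scope classical_set_scope.
Local Open Scope ring_scope.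

(* Since nabla = hat-nabla + S and hat-nabla is torsion free, the components of
   the Poisson condition read (hat-nabla_k w)^{ij} = T^{ij}_k - T^{ji}_k with
   T^{ij}_k := w^{jm} S^i_{mk}; this is the first identity.  As both connections
   are metric, g_{cm} S^m_{pr} is antisymmetric in c and r, so lowering the
   upper index of T while raising its lower one only flips the sign.  This lets
   one recover T from its skew part by the index juggling of the Koszul formula,
   which is the second identity. *)

Section Koszul.
Variables (R : numFieldType) (n : nat).
Variables (G H : 'I_n -> 'I_n -> R) (s : 'I_n -> 'I_n -> 'I_n -> R)
  (w : 'I_n -> 'I_n -> R).
Hypothesis Gsym : forall i j, G i j = G j i.
Hypothesis Hsym : forall i j, H i j = H j i.
Hypothesis HG : forall i j, \sum_m H i m * G m j = (i == j)%:R.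
Hypothesis s_metric : forall k i j,
  \sum_m s m k i * G m j + \sum_m s m k j * G i m = 0.

Definition bivec_contract i j k := \sum_m w j m * s i m k.

Definition skew_part (T : 'I_n -> 'I_n -> 'I_n -> R) k i j :=
  T i j k - T j i k.

Definition koszul (A : 'I_n -> 'I_n -> 'I_n -> R) i j k :=
  2^-1 * (A k i j
          - \sum_r \sum_m A r m j * H r i * G m k
          + \sum_r \sum_m A r i m * H r j * G m k).

Lemma raise_lower_contract (f : 'I_n -> R) i :
  \sum_r H i r * \sum_m G r m * f m = f i.
Proof.
transitivity (\sum_m (i == m)%:R * f m).
  under eq_bigr do rewrite mulr_sumr.
  rewrite exchange_big /=; apply: eq_bigr => m _.
  by rewrite -HG mulr_suml; apply: eq_bigr => r _; rewrite mulrA.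
under eq_bigr do rewrite mulr_natl mulrb eq_sym.
by rewrite -big_mkcond big_pred1_eq.
Qed.

Lemma lowered_s_antisym c p r :
  \sum_m G c m * s m p r = - \sum_m G r m * s m p c.
Proof.
apply/eqP; rewrite -addr_eq0; apply/eqP; rewrite -[RHS](s_metric p r c).
by congr (_ + _); apply: eq_bigr => m _; rewrite mulrC // Gsym.
Qed.

Lemma raised_s_antisym a b p :
  \sum_r s a p r * H r b = - \sum_r s b p r * H r a.
Proof.
have raise a' b' : \sum_r s a' p r * H r b' =
    \sum_r \sum_c H a' c * (\sum_m G c m * s m p r) * H r b'.
  apply: eq_bigr => r _; rewrite -mulr_suml; congr (_ * _).
  by rewrite raise_lower_contract.
rewrite !raise exchange_big -sumrN; apply: eq_bigr => r _.
rewrite -sumrN; apply: eq_bigr => c _.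
by rewrite lowered_s_antisym (Hsym a r) (Hsym c b); ring.
Qed.

Local Notation T := bivec_contract.

Lemma bivec_contract_lower_raise i j k :
  \sum_r \sum_m T m j r * H r i * G m k = - T i j k.
Proof.
have lower r : \sum_m T m j r * G m k = - \sum_m G r m * T m j k.
  transitivity (\sum_p w j p * \sum_m G k m * s m p r).
    rewrite /T; under eq_bigr do rewrite mulr_suml.
    rewrite exchange_big; apply: eq_bigr => p _.
    by rewrite mulr_sumr; apply: eq_bigr => m _; rewrite Gsym; ring.
  under eq_bigr do rewrite lowered_s_antisym mulrN.
  rewrite sumrN /T; congr (- _).
  under [RHS]eq_bigr do rewrite mulr_sumr.
  rewrite [RHS]exchange_big; apply: eq_bigr => p _.
  by rewrite mulr_sumr; apply: eq_bigr => m _; ring.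
transitivity (\sum_r H i r * \sum_m T m j r * G m k).
  apply: eq_bigr => r _; rewrite mulr_sumr; apply: eq_bigr => m _.
  by rewrite Hsym; ring.
under eq_bigr do rewrite lower mulrN.
by rewrite sumrN raise_lower_contract.
Qed.

Lemma bivec_contract_raise_antisym i j k :
  \sum_r \sum_m T j m r * H r i * G m k
  = - \sum_r \sum_m T i m r * H r j * G m k.
Proof.
have factor a b : \sum_r \sum_m T a m r * H r b * G m k =
    \sum_p (\sum_m w m p * G m k) * (\sum_r s a p r * H r b).
  transitivity (\sum_r \sum_m \sum_p w m p * G m k * (s a p r * H r b)).
    apply: eq_bigr => r _; apply: eq_bigr => m _.
    by rewrite /T !mulr_suml; apply: eq_bigr => p _; ring.
  under eq_bigr do rewrite exchange_big /=.
  rewrite exchange_big /=; apply: eq_bigr => p _.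
  by rewrite big_distrlr exchange_big.
rewrite !factor -sumrN; apply: eq_bigr => p _.
by rewrite raised_s_antisym mulrN.
Qed.

Lemma skew_part_koszul (A : 'I_n -> 'I_n -> 'I_n -> R) :
  (forall k i j, A k i j = - A k j i) ->
  forall k i j, skew_part (koszul A) k i j = A k i j.
Proof.
move=> Aanti k i j.
have flip a b : \sum_r \sum_m A r a m * H r b * G m k
              = - \sum_r \sum_m A r m a * H r b * G m k.
  rewrite -sumrN; apply: eq_bigr => r _; rewrite -sumrN; apply: eq_bigr => m _.
  by rewrite Aanti; ring.
by rewrite /skew_part /koszul !flip (Aanti k j i); field.
Qed.

Lemma koszul_skew_part_bivec_contract i j k :
  koszul (skew_part T) i j k = T i j k.
Proof.
rewrite /koszul /skew_part.
under eq_bigr do under eq_bigr do rewrite !mulrBl.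
under [X in _ + X]eq_bigr do under eq_bigr do rewrite !mulrBl.
under eq_bigr do rewrite sumrB.
under [X in _ + X]eq_bigr do rewrite sumrB.
rewrite !sumrB !bivec_contract_lower_raise bivec_contract_raise_antisym.
by field.
Qed.

Lemma skew_part_bivec_contractP (A : 'I_n -> 'I_n -> 'I_n -> R) :
  (forall k i j, A k i j = - A k j i) ->
  (forall i j k, A k i j + T j i k - T i j k = 0) <->
  (forall i j k, T i j k = koszul A i j k).
Proof.
move=> Aanti; split => [E i j k | E i j k].
- have EA k' i' j' : A k' i' j' = skew_part T k' i' j'.
    by rewrite /skew_part -[RHS]addr0 -(E i' j' k'); ring.
  rewrite -koszul_skew_part_bivec_contract /koszul EA.
  under [in RHS]eq_bigr do under eq_bigr do rewrite EA.
  by under [X in _ = _ * (_ + X)]eq_bigr do under eq_bigr do rewrite EA.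
- have := skew_part_koszul Aanti k i j.
  by rewrite /skew_part -!E => <-; ring.
Qed.

End Koszul.

Section Chart.
Variables (R : realType) (n : nat) (U : set 'rV[R]_n).
Local Notation V := 'rV[R]_n.

Lemma partial_eq_opp (f h : V -> R) k x : open U -> U x ->
  (forall y, U y -> f y = - h y) -> differentiable h x ->
  partial k f x = - partial k h x.
Proof.
move=> oU Ux fh dh; rewrite /partial.
rewrite (@near_eq_derive _ _ _ f (- h)).
  by rewrite deriveN //; exact: diff_derivable.
have : \forall y \near x, U y by apply: open_nbhs_nbhs.
by apply: filterS => y /fh.
Qed.

Variable g : 'I_n -> 'I_n -> V -> R.
Hypothesis g_riem : riemannian_metric U g.

Lemma gmat_unit x : U x -> gmat g x \in unitmx.
Proof.
case: g_riem => _ [_ pd] Ux.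
rewrite unitmxE unitfE; apply/negP => /det0P [v v0 vG].
suff : \sum_i \sum_j v 0 i * v 0 j * g i j x = 0.
  by move=> v_null; have := pd x Ux v v0; rewrite v_null ltxx.
rewrite exchange_big /=; apply: big1 => j _.
have : (v *m gmat g x) 0 j = 0 by rewrite vG mxE.
rewrite mxE => vGj.
transitivity (v 0 j * \sum_i v 0 i * gmat g x i j); last by rewrite vGj mulr0.
by rewrite mulr_sumr; apply: eq_bigr => i _; rewrite mxE; ring.
Qed.

Lemma ginv_sym x : U x -> forall i j, ginv g x i j = ginv g x j i.
Proof.
case: g_riem => _ [gsym _] Ux i j.
have gmat_tr : (gmat g x)^T = gmat g x.
  by apply/matrixP => a b; rewrite !mxE gsym.
by rewrite /ginv -[in LHS]gmat_tr -trmx_inv mxE.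
Qed.

Lemma sum_ginv_g x : U x ->
  forall i j, \sum_m ginv g x i m * g m j x = (i == j)%:R.
Proof.
move=> Ux i j; have := mulVmx (gmat_unit Ux).
move/matrixP => /(_ i j); rewrite !mxE => <-.
by apply: eq_bigr => m _; rewrite mxE.
Qed.

Variables (Gh Gm : 'I_n -> 'I_n -> 'I_n -> V -> R) (w : 'I_n -> 'I_n -> V -> R).

Lemma Sdiff_metric x : U x ->
  metric_compatible U g Gm -> metric_compatible U g Gh ->
  forall k i j, \sum_m Sdiff Gm Gh m k i x * g m j x
              + \sum_m Sdiff Gm Gh m k j x * g i m x = 0.
Proof.
move=> Ux mcGm mcGh k i j; rewrite /Sdiff.
under eq_bigr do rewrite mulrBl.
under [X in _ + X]eq_bigr do rewrite mulrBl.
have := mcGm x Ux k i j; have := mcGh x Ux k i j.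
rewrite !sumrB; lra.
Qed.

Lemma cov_bivec_antisym x : open U -> bivector U w -> U x ->
  forall k i j, cov_bivec Gh w k i j x = - cov_bivec Gh w k j i x.
Proof.
move=> oU [w_smooth w_anti] Ux k i j; rewrite /cov_bivec.
rewrite (partial_eq_opp k oU Ux (fun y Uy => w_anti y Uy i j));
  last exact: (w_smooth j i [::] x Ux).
rewrite opprD -sumrN; congr (_ + _); apply: eq_bigr => r _.
by rewrite (w_anti x Ux r j) (w_anti x Ux i r); ring.
Qed.

Lemma cov_bivec_Sdiff x : torsion_free U Gh -> bivector U w -> U x ->
  forall i j k,
    cov_bivec Gh w k i j x
    + \sum_r w i r x * Sdiff Gm Gh j r k x
    - \sum_r w j r x * Sdiff Gm Gh i r k x
  = partial k (w i j) x
    + \sum_r (w r j x * Gm i r k x + w i r x * Gm j r k x).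
Proof.
move=> tfGh [_ w_anti] Ux i j k; rewrite /cov_bivec -!addrA; congr (_ + _).
rewrite -sumrB -big_split /=; apply: eq_bigr => r _.
rewrite /Sdiff (tfGh x Ux i k r) (tfGh x Ux j k r) (w_anti x Ux j r); ring.
Qed.

End Chart.

Theorem proposition5p5 (R : realType) (n : nat) (U : set 'rV[R]_n)
  (g : 'I_n -> 'I_n -> 'rV[R]_n -> R)
  (Gh Gm : 'I_n -> 'I_n -> 'I_n -> 'rV[R]_n -> R)
  (w : 'I_n -> 'I_n -> 'rV[R]_n -> R) :
  open U ->
  riemannian_metric U g ->
  levi_civita U g Gh ->
  connection_on U Gm ->
  metric_compatible U g Gm ->
  bivector U w ->
  (poisson_compatible U w Gm <->
     (forall x, U x -> forall i j k,
        cov_bivec Gh w k i j x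
        + \sum_(r < n) w i r x * Sdiff Gm Gh j r k x
        - \sum_(r < n) w j r x * Sdiff Gm Gh i r k x = 0)) /\
  (poisson_compatible U w Gm <->
     (forall x, U x -> forall i j k,
        \sum_(m < n) w j m x * Sdiff Gm Gh i m k x =
        2^-1 * (cov_bivec Gh w k i j x
          - \sum_(r < n) \sum_(m < n)
              cov_bivec Gh w r m j x * ginv g x r i * g m k x
          + \sum_(r < n) \sum_(m < n)
              cov_bivec Gh w r i m x * ginv g x r j * g m k x))).
Proof.
move=> oU g_riem [_ [tfGh mcGh]] _ mcGm w_bivec.
have poissonE : poisson_compatible U w Gm <->
    (forall x, U x -> forall i j k,
       cov_bivec Gh w k i j x
       + \sum_(r < n) w i r x * Sdiff Gm Gh j r k x
       - \sum_(r < n) w j r x * Sdiff Gm Gh i r k x = 0).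
  split=> P x Ux i j k; have := P x Ux i j k;
    by rewrite (cov_bivec_Sdiff Gm tfGh w_bivec Ux).
split=> //; rewrite poissonE.
have koszulP x (Ux : U x) := skew_part_bivec_contractP (fun i j => w i j x)
  (g_riem.2.1 x Ux) (ginv_sym g_riem Ux) (sum_ginv_g g_riem Ux)
  (Sdiff_metric Ux mcGm mcGh) (cov_bivec_antisym Gh oU w_bivec Ux).
by split=> P x Ux; [apply/(koszulP x Ux).1 | apply/(koszulP x Ux).2];
  apply: P.
Qed.
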